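(* Consider the switched system described in the context. For any $(\mathbf{x}_0,j_0)\in\mathbb{R}^3_+\times\mathcal{S}$ there exists a unique solution $(\mathbf{X}(t),\xi(t))_{t\ge0}$ of $\frac{dX_i}{dt}(t)=X_i(t)f_i(\mathbf{X}(t),\xi(t))$, $i=1,2,3$, with $(\mathbf{X}(0),\xi(0))=(\mathbf{x}_0,j_0)$ (defined for all $t\ge0$). There exists a compact set $\mathcal{K}\subset\mathbb{R}^3_+$ such that every nonnegative solution eventually enters $\mathcal{K}$ and then remains there forever. Moreover, if $\mathbf{X}(0)=\mathbf{x}_0\in\mathbb{R}^{3,\circ}_+=(0,\infty)^3$, then with probability one $\mathbf{X}(t)\in\mathbb{R}^{3,\circ}_+$ for all $t\ge0$.
   Context: Let $r,d,b_1,b_2>0$ and, for $j\in\mathcal{S}=\{1,2\}$, let $c_1(j),c_2(j),e_1(j),e_2(j)>0$. Let $\xi(t)$ be a continuous-time Markov chain on $\mathcal{S}$ switching from $1$ to $2$ at rate $q_{12}>0$ and from $2$ to $1$ at rate $q_{21}>0$. For $\mathbf{x}=(x_1,x_2,x_3)$, $j\in\mathcal{S}$ put $f_1(\mathbf{x},j)=r-x_1-b_1x_2-c_1(j)x_3$, $f_2(\mathbf{x},j)=r-x_2-b_2x_1-c_2(j)x_3$, $f_3(\mathbf{x},j)=e_1(j)x_1+e_2(j)x_2-d$. *)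

From Stdlib Require Import Reals Lra.
From Coquelicot Require Import Coquelicot.
Open Scope R_scope.

Inductive state : Type := s1 | s2.

Inductive idx : Type := I1 | I2 | I3.
Definition vec3 := idx -> R.

Definition nonneg3 (x : vec3) : Prop := forall i, 0 <= x i.
Definition pos3 (x : vec3) : Prop := forall i, 0 < x i.

Definition fvec (r d b1 b2 : R) (c1 c2 e1 e2 : state -> R)
  (x : vec3) (j : state) (i : idx) : R :=
  match i with
  | I1 => r - x I1 - b1 * x I2 - c1 j * x I3
  | I2 => r - x I2 - b2 * x I1 - c2 j * x I3
  | I3 => e1 j * x I1 + e2 j * x I2 - d
  end.

(* Almost every path of
   a continuous-time Markov chain on {1,2} with finite rates is of this form. *)
Definition switching_path (xi : R -> state) : Prop :=
  exists tau : nat -> R,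
    tau O = 0 /\
    (forall n, tau n < tau (S n)) /\
    (forall M, exists n, M < tau n) /\
    (forall n t, tau n <= t < tau (S n) -> xi t = xi (tau n)).

(* X is a solution on [0,oo) of dX_i/dt = X_i f_i(X, xi) with X(0) = x0:
   each component is continuous on [0,oo) and, at every t >= 0, has right
   derivative X_i(t) f_i(X(t), xi(t)) (xi is right-continuous; at non-switching
   times t > 0 this together with continuity gives the classical derivative). *)
Definition solution (r d b1 b2 : R) (c1 c2 e1 e2 : state -> R)
  (xi : R -> state) (x0 : vec3) (X : R -> vec3) : Prop :=
  (forall i, X 0 i = x0 i) /\
  (forall i t, 0 < t -> continuous (fun s => X s i) t) /\
  (forall i t, 0 <= t ->
     filterlim (fun h => (X (t + h) i - X t i) / h) (at_right 0)
       (locally (X t i * fvec r d b1 b2 c1 c2 e1 e2 (X t) (xi t) i))).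

(* Compact subsets of R^3: closed and bounded (Heine-Borel). *)
Definition bounded3 (K : vec3 -> Prop) : Prop :=
  exists M, forall x, K x -> forall i, Rabs (x i) <= M.
Definition closed3 (K : vec3 -> Prop) : Prop :=
  forall x, ~ K x -> exists eps, 0 < eps /\
    forall y, (forall i, Rabs (y i - x i) < eps) -> ~ K y.
Definition compact3 (K : vec3 -> Prop) : Prop := bounded3 K /\ closed3 K.

From Stdlib Require Import Reals Lra Lia Classical ClassicalEpsilon FunctionalExtensionality.
From Coquelicot Require Import Coquelicot.
Open Scope R_scope.

(* On an interval where xi is constant the system is an autonomous Kolmogorov system.
   With V x = x1 + x2 + kap x3 and kap <= c_i(j) / e_i(j) for both states, the predation
   terms cancel in dV/dt and dV/dt <= C - m V on R^3_+ with constants independent of j.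
   Hence V stays bounded along nonnegative trajectories and eventually falls below
   C / m + 1, so {x >= 0, V x <= C / m + 1} is a compact absorbing set.  Because the flow
   stays in a cube determined by V, the field may be clamped to a globally Lipschitz one,
   for which Picard iteration gives a global solution; gluing these solutions at the
   switching times solves the switched system, and a Gronwall estimate on the squared
   distance gives uniqueness.  Finally X_i' = X_i f_i with f_i bounded on bounded time
   intervals, so X_i t >= X_i 0 exp (-L t): nonnegative (positive) data stay nonnegative
   (positive). *)

(** * Right derivatives and comparison principles *)

Lemma continuous_eps (f : R -> R) (t : R) :
  continuous f t <-> forall eps, 0 < eps -> exists del, 0 < del /\
    forall s, Rabs (s - t) < del -> Rabs (f s - f t) < eps.
Proof.
  unfold continuous. rewrite filterlim_locally. split.
  - intros H eps Heps. destruct (H (mkposreal eps Heps)) as [[del Hdel] Hball].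
    exists del. split; [exact Hdel|]. intros s Hs. apply (Hball s), Hs.
  - intros H [eps Heps]. destruct (H eps Heps) as [del [Hdel Hball]].
    exists (mkposreal del Hdel). intros s Hs. apply Hball, Hs.
Qed.

Lemma lim_at_right0_eps (g : R -> R) (l : R) :
  filterlim g (at_right 0) (locally l) <-> forall eps, 0 < eps -> exists del, 0 < del /\
    forall h, 0 < h < del -> Rabs (g h - l) < eps.
Proof.
  rewrite filterlim_locally. split.
  - intros H eps Heps. destruct (H (mkposreal eps Heps)) as [[del Hdel] Hball].
    exists del. split; [exact Hdel|]. intros h Hh. apply (Hball h); [|lra].
    change (Rabs (h - 0) < del). rewrite Rminus_0_r, Rabs_pos_eq; lra.
  - intros H [eps Heps]. destruct (H eps Heps) as [del [Hdel Hball]].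
    exists (mkposreal del Hdel). intros h Hh Hpos. apply Hball.
    change (Rabs (h - 0) < del) in Hh. rewrite Rminus_0_r, Rabs_pos_eq in Hh; lra.
Qed.

Lemma at_right0_forall (P : R -> Prop) : (forall h, 0 < h -> P h) -> at_right 0 P.
Proof. intros HP. exists (mkposreal 1 Rlt_0_1). intros h _. exact (HP h). Qed.

Lemma lim_at_right0_ext (g1 g2 : R -> R) (l : R) : (forall h, 0 < h -> g1 h = g2 h) ->
  filterlim g1 (at_right 0) (locally l) -> filterlim g2 (at_right 0) (locally l).
Proof. intros He. apply filterlim_ext_loc, at_right0_forall, He. Qed.

Lemma lim_at_right0_plus (g1 g2 : R -> R) (l1 l2 : R) :
  filterlim g1 (at_right 0) (locally l1) -> filterlim g2 (at_right 0) (locally l2) ->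
  filterlim (fun h => g1 h + g2 h) (at_right 0) (locally (l1 + l2)).
Proof.
  intros H1 H2. apply (filterlim_comp_2 g1 g2 Rplus H1 H2). apply (filterlim_plus l1 l2).
Qed.

Lemma lim_at_right0_mult (g1 g2 : R -> R) (l1 l2 : R) :
  filterlim g1 (at_right 0) (locally l1) -> filterlim g2 (at_right 0) (locally l2) ->
  filterlim (fun h => g1 h * g2 h) (at_right 0) (locally (l1 * l2)).
Proof.
  intros H1 H2. apply (filterlim_comp_2 g1 g2 Rmult H1 H2). apply (filterlim_mult l1 l2).
Qed.

(* Coquelicot's [continuous_plus] etc. are stated over normed modules, and [apply] fails
   to unify them with [Rplus] and [Rmult]; these specialisations fix that. *)
Lemma continuous_Rplus (f g : R -> R) (t : R) :
  continuous f t -> continuous g t -> continuous (fun s => f s + g s) t.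
Proof. exact (continuous_plus f g t). Qed.

Lemma continuous_Rminus (f g : R -> R) (t : R) :
  continuous f t -> continuous g t -> continuous (fun s => f s - g s) t.
Proof. exact (continuous_minus f g t). Qed.

Lemma continuous_Rmult (f g : R -> R) (t : R) :
  continuous f t -> continuous g t -> continuous (fun s => f s * g s) t.
Proof. exact (continuous_mult f g t). Qed.

Lemma continuous_Rexp (f : R -> R) (t : R) :
  continuous f t -> continuous (fun s => exp (f s)) t.
Proof.
  intros Hf. apply (continuous_comp f exp t Hf).
  apply (ex_derive_continuous (K := R_AbsRing) (V := R_NormedModule) exp).
  exists (exp (f t)). apply is_derive_Reals, derivable_pt_lim_exp.
Qed.

Ltac continuity_R :=
  repeat match goal with
  | |- continuous (fun _ => ?c) _ => apply continuous_const
  | |- continuous (fun s => s) _ => apply continuous_id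
  | |- continuous (Rmult ?c) ?t => (* eta-reduced [fun s => c * s] *)
      apply (continuous_Rmult (fun _ => c) (fun s => s) t)
  | |- continuous (fun _ => _ - _) _ => apply continuous_Rminus
  | |- continuous (fun _ => _ + _) _ => apply continuous_Rplus
  | |- continuous (fun _ => _ * _) _ => apply continuous_Rmult
  | |- continuous (fun _ => exp _) _ => apply continuous_Rexp
  end.

Lemma continuous_Rmax0 (t : R) : continuous (fun s => Rmax 0 s) t.
Proof.
  apply continuous_eps. intros eps Heps. exists eps. split; [exact Heps|]. intros s Hs.
  apply Rabs_def2 in Hs. apply Rabs_def1; unfold Rmax;
    destruct (Rle_dec 0 s), (Rle_dec 0 t); lra.
Qed.

Lemma continuous_shift (g : R -> R) (c t : R) :
  continuous g (t - c) -> continuous (fun s => g (s - c)) t.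
Proof.
  intros Hg. apply (continuous_comp (fun s => s - c) g); [continuity_R | exact Hg].
Qed.

Lemma continuous_glue (f g1 g2 : R -> R) (t del : R) : 0 < del ->
  g1 t = f t -> g2 t = f t ->
  (forall s, t - del < s < t -> f s = g1 s) -> (forall s, t <= s < t + del -> f s = g2 s) ->
  continuous g1 t -> continuous g2 t -> continuous f t.
Proof.
  intros Hdel E1 E2 H1 H2 C1 C2. apply continuous_eps. intros eps Heps.
  destruct (proj1 (continuous_eps g1 t) C1 eps Heps) as [d1 [Hd1 L1]].
  destruct (proj1 (continuous_eps g2 t) C2 eps Heps) as [d2 [Hd2 L2]].
  exists (Rmin del (Rmin d1 d2)). split; [repeat apply Rmin_pos; assumption|]. intros s Hs.
  pose proof (Rmin_l del (Rmin d1 d2)). pose proof (Rmin_r del (Rmin d1 d2)).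
  pose proof (Rmin_l d1 d2). pose proof (Rmin_r d1 d2). pose proof (Rabs_def2 _ _ Hs).
  destruct (Rlt_or_le s t).
  - rewrite H1, <- E1 by lra. apply L1. apply Rabs_def1; lra.
  - rewrite H2, <- E2 by lra. apply L2. apply Rabs_def1; lra.
Qed.

Definition right_deriv (f : R -> R) (t l : R) : Prop :=
  filterlim (fun h => (f (t + h) - f t) / h) (at_right 0) (locally l).

Lemma right_deriv_eps (f : R -> R) (t l : R) :
  right_deriv f t l <-> forall eps, 0 < eps -> exists del, 0 < del /\
    forall h, 0 < h < del -> Rabs ((f (t + h) - f t) / h - l) < eps.
Proof. exact (lim_at_right0_eps _ l). Qed.

Lemma right_deriv_right_cont (f : R -> R) (t l : R) :
  right_deriv f t l -> filterlim (fun h => f (t + h)) (at_right 0) (locally (f t)).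
Proof.
  intros H. apply (lim_at_right0_ext (fun h => f t + h * ((f (t + h) - f t) / h))).
  { intros h Hh. field. lra. }
  assert (Hlim : filterlim (fun h => f t + h * ((f (t + h) - f t) / h)) (at_right 0)
                   (locally (f t + 0 * l))).
  { apply lim_at_right0_plus; [apply filterlim_const|].
    apply lim_at_right0_mult; [|exact H].
    apply (lim_at_right0_eps (fun h => h)). intros eps Heps.
    exists eps. split; [exact Heps|]. intros h Hh. rewrite Rminus_0_r, Rabs_pos_eq; lra. }
  rewrite Rmult_0_l, Rplus_0_r in Hlim. exact Hlim.
Qed.

Lemma right_deriv_const (c t : R) : right_deriv (fun _ => c) t 0.
Proof.
  apply (lim_at_right0_ext (fun _ => 0)); [intros h Hh; field; lra|].
  apply filterlim_const.
Qed.

Lemma right_deriv_id (t : R) : right_deriv (fun s => s) t 1.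
Proof.
  apply (lim_at_right0_ext (fun _ => 1)); [intros h Hh; field; lra|].
  apply filterlim_const.
Qed.

Lemma right_deriv_plus (f g : R -> R) (t l1 l2 : R) :
  right_deriv f t l1 -> right_deriv g t l2 -> right_deriv (fun s => f s + g s) t (l1 + l2).
Proof.
  intros H1 H2.
  apply (lim_at_right0_ext (fun h => (f (t + h) - f t) / h + (g (t + h) - g t) / h)).
  { intros h Hh. field. lra. }
  apply lim_at_right0_plus; assumption.
Qed.

Lemma right_deriv_scal (c : R) (f : R -> R) (t l : R) :
  right_deriv f t l -> right_deriv (fun s => c * f s) t (c * l).
Proof.
  intros H. apply (lim_at_right0_ext (fun h => c * ((f (t + h) - f t) / h))).
  { intros h Hh. field. lra. }
  apply lim_at_right0_mult; [apply filterlim_const | exact H].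
Qed.

Lemma right_deriv_minus (f g : R -> R) (t l1 l2 : R) :
  right_deriv f t l1 -> right_deriv g t l2 -> right_deriv (fun s => f s - g s) t (l1 - l2).
Proof.
  intros H1 H2.
  apply (lim_at_right0_ext (fun h => ((f (t + h) + -1 * g (t + h)) - (f t + -1 * g t)) / h)).
  { intros h Hh. field. lra. }
  replace (l1 - l2) with (l1 + -1 * l2) by ring.
  apply (right_deriv_plus f (fun s => -1 * g s)); [exact H1|]. apply right_deriv_scal, H2.
Qed.

Lemma right_deriv_mult (f g : R -> R) (t l1 l2 : R) :
  right_deriv f t l1 -> right_deriv g t l2 ->
  right_deriv (fun s => f s * g s) t (f t * l2 + l1 * g t).
Proof.
  intros H1 H2.
  apply (lim_at_right0_ext
           (fun h => f (t + h) * ((g (t + h) - g t) / h) + (f (t + h) - f t) / h * g t)).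
  { intros h Hh. field. lra. }
  apply lim_at_right0_plus.
  - apply lim_at_right0_mult; [exact (right_deriv_right_cont f t l1 H1) | exact H2].
  - apply lim_at_right0_mult; [exact H1 | apply filterlim_const].
Qed.

Lemma right_deriv_of_is_derive (f : R -> R) (t l : R) : is_derive f t l -> right_deriv f t l.
Proof.
  intros H. apply is_derive_Reals in H. apply right_deriv_eps. intros eps Heps.
  destruct (H eps Heps) as [[del Hdel] Hq]. exists del. split; [exact Hdel|].
  intros h Hh. apply Hq; [lra|]. simpl. rewrite Rabs_pos_eq; lra.
Qed.

Lemma right_deriv_ext_right (f g : R -> R) (t l del : R) : 0 < del ->
  (forall s, t <= s < t + del -> f s = g s) -> right_deriv f t l -> right_deriv g t l.
Proof.
  intros Hdel He H. apply right_deriv_eps. intros eps Heps.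
  destruct (proj1 (right_deriv_eps f t l) H eps Heps) as [del' [Hdel' Hq]].
  exists (Rmin del del'). split; [apply Rmin_pos; lra|].
  intros h Hh. pose proof (Rmin_l del del'). pose proof (Rmin_r del del').
  rewrite <- (He t), <- (He (t + h)) by lra. apply Hq. lra.
Qed.

Lemma right_deriv_shift (f : R -> R) (c t l : R) :
  right_deriv f (t - c) l -> right_deriv (fun s => f (s - c)) t l.
Proof.
  apply lim_at_right0_ext. intros h _. now replace (t + h - c) with (t - c + h) by ring.
Qed.

Ltac right_deriv_R :=
  repeat match goal with
  | |- right_deriv (fun _ => ?c) _ _ => apply right_deriv_const
  | |- right_deriv (fun _ => _ - _) _ _ => apply right_deriv_minus
  | |- right_deriv (fun _ => _ + _) _ _ => apply right_deriv_plus
  | |- right_deriv (fun _ => ?c * _) _ _ => apply right_deriv_scal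
  end.

Lemma right_deriv_exp (A B t : R) :
  right_deriv (fun s => A * exp (B * s)) t (A * B * exp (B * t)).
Proof. apply right_deriv_of_is_derive. auto_derive; [easy|]. ring. Qed.

Lemma is_derive_integral (g : R -> R) (t : R) : (forall s, continuous g s) ->
  is_derive (fun b => RInt g 0 b) t (g t).
Proof.
  intros Hg. apply (is_derive_RInt g (fun b => RInt g 0 b) 0 t); [|apply Hg].
  exists (mkposreal 1 Rlt_0_1). intros b _.
  apply (RInt_correct (V := R_CompleteNormedModule)), ex_RInt_continuous. intros s _. apply Hg.
Qed.

Lemma continuous_integral (g : R -> R) (t : R) : (forall s, continuous g s) ->
  continuous (fun b => RInt g 0 b) t.
Proof.
  intros Hg. apply (ex_derive_continuous (K := R_AbsRing) (V := R_NormedModule)).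
  exists (g t). apply is_derive_integral, Hg.
Qed.

Lemma right_deriv_integral (c : R) (g : R -> R) (t : R) : (forall s, continuous g s) ->
  right_deriv (fun s => c + RInt g 0 s) t (g t).
Proof.
  intros Hg. rewrite <- (Rplus_0_l (g t)).
  apply right_deriv_plus; [apply right_deriv_const|].
  apply right_deriv_of_is_derive, is_derive_integral, Hg.
Qed.

Lemma real_induction (a b : R) (P : R -> Prop) : a <= b ->
  (forall s, a <= s <= b -> (forall u, a <= u < s -> P u) -> P s) ->
  (forall s, a <= s < b -> P s ->
     exists del, 0 < del /\ forall u, s < u < s + del -> u <= b -> P u) ->
  forall s, a <= s <= b -> P s.
Proof.
  intros Hab Hleft Hright.
  set (E := fun x => a <= x <= b /\ forall u, a <= u <= x -> P u).
  assert (Ea : E a).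
  { split; [lra|]. intros u Hu. replace u with a by lra. apply Hleft; [lra|]. intros; lra. }
  assert (Ebound : bound E) by (exists b; intros x [Hx _]; lra).
  destruct (completeness E Ebound (ex_intro _ a Ea)) as [c [Hub Hlub]].
  assert (Hac : a <= c) by (apply Hub, Ea).
  assert (Hcb : c <= b) by (apply Hlub; intros x [Hx _]; lra).
  assert (Hbelow : forall u, a <= u < c -> P u).
  { intros u Hu. destruct (classic (exists x, E x /\ u < x)) as [[x [[_ Hx] Hux]]|Hn].
    - apply Hx. lra.
    - enough (c <= u) by lra. apply Hlub. intros x Ex.
      destruct (Rle_or_lt x u); [lra|]. exfalso. apply Hn. now exists x. }
  assert (Ec : E c).
  { split; [lra|]. intros u Hu. destruct (Rlt_or_le u c); [apply Hbelow; lra|].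
    replace u with c by lra. apply Hleft; [lra | exact Hbelow]. }
  assert (c = b) as <-.
  { destruct (Rlt_or_le c b) as [Hlt|]; [exfalso|lra].
    destruct (Hright c (conj Hac Hlt) (proj2 Ec c ltac:(lra))) as [del [Hdel Hnext]].
    assert (c < Rmin (c + del / 2) b) by (apply Rmin_glb_lt; lra).
    pose proof (Rmin_l (c + del / 2) b). pose proof (Rmin_r (c + del / 2) b).
    set (x := Rmin (c + del / 2) b) in *.
    assert (Ex : E x).
    { split; [lra|]. intros u Hu. destruct (Rle_or_lt u c); [apply (proj2 Ec); lra|].
      apply Hnext; lra. }
    pose proof (Hub x Ex). lra. }
  intros s Hs. apply (proj2 Ec). lra.
Qed.

Lemma continuous_nonpos_of_left (w : R -> R) (a s : R) : a < s -> continuous w s ->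
  (forall u, a <= u < s -> w u <= 0) -> w s <= 0.
Proof.
  intros Has Hw Hleft. destruct (Rle_or_lt (w s) 0) as [|Hpos]; [assumption|exfalso].
  destruct (proj1 (continuous_eps w s) Hw (w s) Hpos) as [del [Hdel Hclose]].
  set (u := s - Rmin del (s - a) / 2).
  pose proof (Rmin_l del (s - a)). pose proof (Rmin_r del (s - a)).
  assert (0 < Rmin del (s - a)) by (apply Rmin_pos; lra).
  assert (Hu : Rabs (u - s) < del) by (unfold u; rewrite Rabs_left; lra).
  pose proof (Hleft u ltac:(unfold u; lra)). pose proof (Hclose u Hu) as Hc.
  apply Rabs_def2 in Hc. lra.
Qed.

Lemma right_deriv_nonpos_ahead (w : R -> R) (s l : R) : right_deriv w s l ->
  w s <= 0 -> (w s = 0 -> l < 0) ->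
  exists del, 0 < del /\ forall u, s < u < s + del -> w u <= 0.
Proof.
  intros Hd Hws Hl. destruct Hws as [Hneg|Hzero].
  - destruct (proj1 (lim_at_right0_eps _ _) (right_deriv_right_cont w s l Hd) (- w s))
      as [del [Hdel Hclose]]; [lra|].
    exists del. split; [exact Hdel|]. intros u Hu.
    pose proof (Hclose (u - s) ltac:(lra)) as Hc. replace (s + (u - s)) with u in Hc by ring.
    apply Rabs_def2 in Hc. lra.
  - specialize (Hl Hzero).
    destruct (proj1 (right_deriv_eps w s l) Hd (- l)) as [del [Hdel Hq]]; [lra|].
    exists del. split; [exact Hdel|]. intros u Hu.
    pose proof (Hq (u - s) ltac:(lra)) as Hc. replace (s + (u - s)) with u in Hc by ring.
    rewrite Hzero, Rminus_0_r in Hc. apply Rabs_def2 in Hc.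
    assert (Hquot : w u / (u - s) < 0) by lra.
    enough (w u = w u / (u - s) * (u - s)) by nra. field. lra.
Qed.

Lemma right_deriv_gronwall (a b L del : R) (z D : R -> R) : a <= b -> 0 <= L -> 0 < del ->
  (forall t, a < t <= b -> continuous z t) ->
  (forall t, a <= t < b -> right_deriv z t (D t)) ->
  (forall t, a <= t < b -> 0 < z t < del -> D t <= L * z t) ->
  z a <= 0 -> z b <= 0.
Proof.
  intros Hab HL Hdel Hcont Hder HD Ha.
  destruct (Rle_or_lt (z b) 0) as [|Hzb]; [assumption|exfalso].
  (* Compare z with eps * exp ((L + 1) (t - a)), which stays below both del and z b. *)
  set (K := L + 1). set (Eb := exp (K * (b - a))).
  assert (HEb : 0 < Eb) by apply exp_pos.
  set (eps := Rmin del (z b) / (2 * Eb)).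
  pose proof (Rmin_l del (z b)). pose proof (Rmin_r del (z b)).
  assert (0 < Rmin del (z b)) by (apply Rmin_pos; lra).
  assert (Heps : 0 < eps) by (apply Rdiv_lt_0_compat; lra).
  assert (HepsEb : eps * Eb = Rmin del (z b) / 2) by (unfold eps; field; lra).
  set (E := fun s => eps * exp (K * (s - a))).
  assert (Epos : forall s, 0 < E s) by (intros s; apply Rmult_lt_0_compat; [lra | apply exp_pos]).
  assert (Emono : forall s, s <= b -> E s <= eps * Eb).
  { intros s Hs. apply Rmult_le_compat_l; [lra|]. unfold Eb.
    destruct (Req_dec s b) as [->|]; [lra|]. left. apply exp_increasing. unfold K. nra. }
  assert (Hw : forall s, a <= s <= b -> z s - E s <= 0).
  { apply real_induction; [exact Hab| |].
    - intros s Hs Hbefore. destruct (Rlt_or_le a s) as [Has|Has].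
      + apply (continuous_nonpos_of_left (fun u => z u - E u) a s Has); [|exact Hbefore].
        apply continuous_Rminus; [apply Hcont; lra|]. unfold E. continuity_R.
      + replace s with a by lra. pose proof (Epos a). lra.
    - intros s Hs Hws.
      destruct (right_deriv_nonpos_ahead (fun u => z u - E u) s (D s - K * E s))
        as [d [Hd Hahead]]; [| exact Hws | |].
      + apply right_deriv_minus; [apply Hder, Hs|]. apply right_deriv_of_is_derive.
        unfold E. auto_derive; [easy|]. unfold Rminus. ring.
      + intros Hzero. pose proof (Emono s ltac:(lra)). pose proof (Epos s).
        pose proof (HD s Hs ltac:(lra)). unfold K. nra.
      + exists d. split; [exact Hd|]. intros u Hu _. exact (Hahead u Hu). }
  pose proof (Hw b ltac:(lra)). pose proof (Emono b ltac:(lra)). lra.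
Qed.

Lemma right_deriv_nonincreasing (a b : R) (z D : R -> R) : a <= b ->
  (forall t, a < t <= b -> continuous z t) ->
  (forall t, a <= t < b -> right_deriv z t (D t)) ->
  (forall t, a <= t < b -> D t <= 0) -> z b <= z a.
Proof.
  intros Hab Hcont Hder HD.
  enough (z b - z a <= 0) by lra.
  apply (right_deriv_gronwall a b 0 1 (fun s => z s - z a) (fun s => D s - 0)); try lra.
  - intros t Ht. continuity_R. apply Hcont, Ht.
  - intros t Ht. right_deriv_R. apply Hder, Ht.
  - intros t Ht _. pose proof (HD t Ht). lra.
Qed.

Lemma right_deriv_exp_lower_bound (y Dy : R -> R) (L t : R) : 0 <= L -> 0 <= t -> 0 <= y 0 ->
  (forall s, 0 < s <= t -> continuous y s) ->
  (forall s, 0 <= s < t -> right_deriv y s (Dy s)) ->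
  (forall s, 0 <= s < t -> - L * Rabs (y s) <= Dy s) ->
  y 0 * exp (- L * t) <= y t.
Proof.
  intros HL Ht Hy0 Hcont Hder HD.
  enough (y 0 * exp (- L * t) - y t <= 0) by lra.
  apply (right_deriv_gronwall 0 t (2 * L) 1 (fun s => y 0 * exp (- L * s) - y s)
           (fun s => y 0 * - L * exp (- L * s) - Dy s)); try lra.
  - intros s Hs. continuity_R. apply Hcont, Hs.
  - intros s Hs. apply right_deriv_minus; [apply right_deriv_exp | apply Hder, Hs].
  - intros s Hs [Hz _]. pose proof (HD s Hs). pose proof (exp_pos (- L * s)).
    assert (0 <= y 0 * exp (- L * s)) by nra.
    destruct (Rle_or_lt 0 (y s)).
    + rewrite Rabs_pos_eq in * by lra. nra.
    + rewrite Rabs_left in * by lra. nra.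
  - rewrite Rmult_0_r, exp_0. lra.
Qed.

Lemma right_deriv_stays_below (w Dw : R -> R) (t0 L0 : R) :
  (forall t, t0 < t -> continuous w t) -> (forall t, t0 <= t -> right_deriv w t (Dw t)) ->
  (forall t, t0 <= t -> L0 < w t < L0 + 1 -> Dw t <= 0) ->
  w t0 <= L0 -> forall t, t0 <= t -> w t <= L0.
Proof.
  intros Hcont Hder HD H0 t Ht.
  enough (w t - L0 <= 0) by lra.
  apply (right_deriv_gronwall t0 t 0 1 (fun s => w s - L0) (fun s => Dw s - 0)); try lra.
  - intros s Hs. continuity_R. apply Hcont. lra.
  - intros s Hs. right_deriv_R. apply Hder. lra.
  - intros s Hs Hz. pose proof (HD s ltac:(lra) ltac:(lra)). lra.
Qed.

Lemma right_deriv_eventually_below (w Dw : R -> R) (c m : R) : 0 < m ->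
  (forall t, 0 < t -> continuous w t) -> (forall t, 0 <= t -> right_deriv w t (Dw t)) ->
  (forall t, 0 <= t -> Dw t <= c - m * w t) ->
  exists T, 0 <= T /\ forall t, T <= t -> w t <= c / m + 1.
Proof.
  intros Hm Hcont Hder HD.
  set (L0 := c / m + 1).
  assert (HmL0 : m * L0 = c + m) by (unfold L0; field; lra).
  assert (Hstay : forall t0, 0 <= t0 -> w t0 <= L0 -> forall t, t0 <= t -> w t <= L0).
  { intros t0 Ht0 Hw0. apply right_deriv_stays_below with Dw;
      [intros; apply Hcont; lra | intros; apply Hder; lra | | exact Hw0].
    intros t Ht Hw. pose proof (HD t ltac:(lra)). nra. }
  (* Above level L0 the derivative is at most -m, so w cannot stay there longer than T. *)
  set (T := Rmax 0 ((w 0 - L0) / m) + 1).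
  pose proof (Rmax_l 0 ((w 0 - L0) / m)). pose proof (Rmax_r 0 ((w 0 - L0) / m)).
  assert (HT : w 0 - L0 < m * T).
  { assert (m * ((w 0 - L0) / m) = w 0 - L0) by (field; lra). unfold T. nra. }
  exists T. split; [unfold T; lra|].
  enough (HwT : w T <= L0) by (intros t Ht; apply (Hstay T); unfold T in *; lra).
  destruct (Rle_or_lt (w T) L0) as [|HwT]; [assumption|exfalso].
  assert (Habove : forall s, 0 <= s <= T -> L0 < w s).
  { intros s Hs. destruct (Rle_or_lt (w s) L0) as [Hle|]; [|assumption].
    pose proof (Hstay s ltac:(lra) Hle T ltac:(lra)). lra. }
  assert (Hdecr : w T + m * T <= w 0 + m * 0).
  { apply (right_deriv_nonincreasing 0 T (fun s => w s + m * s) (fun s => Dw s + m * 1));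
      [unfold T; lra | | |].
    - intros s Hs. continuity_R. apply Hcont. lra.
    - intros s Hs. apply right_deriv_plus; [apply Hder; lra|].
      apply right_deriv_scal, right_deriv_id.
    - intros s Hs. pose proof (HD s ltac:(lra)). pose proof (Habove s ltac:(lra)). nra. }
  lra.
Qed.

Lemma bounded_on_interval (f : R -> R) (a b : R) : a <= b ->
  (forall t, a < t <= b -> continuous f t) ->
  (forall t, a <= t < b -> filterlim (fun h => f (t + h)) (at_right 0) (locally (f t))) ->
  exists M, forall t, a <= t <= b -> Rabs (f t) <= M.
Proof.
  intros Hab Hcont Hright.
  enough (H : forall s, a <= s <= b -> exists M, forall t, a <= t <= s -> Rabs (f t) <= M)
    by (apply H; lra).
  apply real_induction; [exact Hab| |].
  - intros s Hs Hbefore. destruct (Rlt_or_le a s) as [Has|Has].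
    2: { exists (Rabs (f a)). intros t Ht. replace t with a by lra. lra. }
    destruct (proj1 (continuous_eps f s) (Hcont s ltac:(lra)) 1 ltac:(lra)) as [del [Hdel Hclose]].
    pose proof (Rmin_l del (s - a)). pose proof (Rmin_r del (s - a)).
    assert (0 < Rmin del (s - a)) by (apply Rmin_pos; lra).
    destruct (Hbefore (s - Rmin del (s - a) / 2) ltac:(lra)) as [M HM].
    exists (Rmax M (Rabs (f s) + 1)). intros t Ht.
    destruct (Rle_or_lt t (s - Rmin del (s - a) / 2)).
    + apply (Rle_trans _ M); [apply HM; lra | apply Rmax_l].
    + apply (Rle_trans _ (Rabs (f s) + 1)); [|apply Rmax_r].
      pose proof (Hclose t ltac:(apply Rabs_def1; lra)).
      pose proof (Rabs_triang_inv (f t) (f s)). lra.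
  - intros s Hs [M HM].
    destruct (proj1 (lim_at_right0_eps _ _) (Hright s Hs) 1 ltac:(lra)) as [del [Hdel Hclose]].
    exists del. split; [exact Hdel|]. intros u Hu Hub.
    exists (Rmax M (Rabs (f s) + 1)). intros t Ht.
    destruct (Rle_or_lt t s).
    + apply (Rle_trans _ M); [apply HM; lra | apply Rmax_l].
    + apply (Rle_trans _ (Rabs (f s) + 1)); [|apply Rmax_r].
      pose proof (Hclose (t - s) ltac:(lra)) as Hc. replace (s + (t - s)) with t in Hc by ring.
      pose proof (Rabs_triang_inv (f t) (f s)). lra.
Qed.

Definition l1dist (x y : vec3) : R :=
  Rabs (x I1 - y I1) + Rabs (x I2 - y I2) + Rabs (x I3 - y I3).

Lemma Rabs_le_l1dist (x y : vec3) (i : idx) : Rabs (x i - y i) <= l1dist x y.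
Proof.
  unfold l1dist. pose proof (Rabs_pos (x I1 - y I1)). pose proof (Rabs_pos (x I2 - y I2)).
  pose proof (Rabs_pos (x I3 - y I3)). destruct i; lra.
Qed.

Lemma l1dist_ge0 (x y : vec3) : 0 <= l1dist x y.
Proof. pose proof (Rabs_le_l1dist x y I1). pose proof (Rabs_pos (x I1 - y I1)). lra. Qed.

Lemma l1dist_sqr_le (x y : vec3) : l1dist x y * l1dist x y
  <= 3 * ((x I1 - y I1) * (x I1 - y I1) + (x I2 - y I2) * (x I2 - y I2)
          + (x I3 - y I3) * (x I3 - y I3)).
Proof.
  assert (Hsq : forall a, a * a = Rabs a * Rabs a)
    by (intros a; rewrite <- Rabs_mult, Rabs_pos_eq; [reflexivity | apply Rle_0_sqr]).
  unfold l1dist. rewrite !(Hsq (x _ - y _)).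
  pose proof (Rle_0_sqr (Rabs (x I1 - y I1) - Rabs (x I2 - y I2))).
  pose proof (Rle_0_sqr (Rabs (x I1 - y I1) - Rabs (x I3 - y I3))).
  pose proof (Rle_0_sqr (Rabs (x I2 - y I2) - Rabs (x I3 - y I3))).
  unfold Rsqr in *. lra.
Qed.

Lemma l1dist_le_of_right_deriv (f g df dg : R -> vec3) (K k t : R) : 0 <= K -> 0 <= t ->
  (forall i, f 0 i = g 0 i) ->
  (forall i s, 0 < s <= t -> continuous (fun u => f u i) s) ->
  (forall i s, 0 < s <= t -> continuous (fun u => g u i) s) ->
  (forall i s, 0 <= s < t -> right_deriv (fun u => f u i) s (df s i)) ->
  (forall i s, 0 <= s < t -> right_deriv (fun u => g u i) s (dg s i)) ->
  (forall s, 0 <= s < t -> l1dist (df s) (dg s) <= K * k * exp (k * s)) ->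
  l1dist (f t) (g t) <= K * exp (k * t).
Proof.
  intros HK Ht H0 Hfc Hgc Hfd Hgd Hbound.
  (* Freeze the signs of the coordinates of f t - g t: the signed sum is differentiable
     and dominated by the l1 distance at all times, with equality at time t. *)
  set (sg := fun i => if Rle_dec 0 (f t i - g t i) then 1 else -1).
  assert (Hsg_le : forall i x, sg i * x <= Rabs x).
  { intros i x. unfold sg. pose proof (Rle_abs x). pose proof (Rabs_maj2 x).
    destruct (Rle_dec 0 _); lra. }
  assert (Hsg_eq : forall i, sg i * (f t i - g t i) = Rabs (f t i - g t i)).
  { intros i. unfold sg. destruct (Rle_dec 0 _).
    - rewrite Rabs_pos_eq; lra.
    - rewrite Rabs_left; lra. }
  set (signed := fun (x y : vec3) =>
         sg I1 * (x I1 - y I1) + sg I2 * (x I2 - y I2) + sg I3 * (x I3 - y I3)).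
  assert (Hsigned_le : forall x y, signed x y <= l1dist x y).
  { intros x y. unfold signed, l1dist.
    pose proof (Hsg_le I1 (x I1 - y I1)). pose proof (Hsg_le I2 (x I2 - y I2)).
    pose proof (Hsg_le I3 (x I3 - y I3)). lra. }
  assert (Hz : signed (f t) (g t) - K * exp (k * t) <= signed (f 0) (g 0) - K * exp (k * 0)).
  { apply (right_deriv_nonincreasing 0 t (fun s => signed (f s) (g s) - K * exp (k * s))
             (fun s => signed (df s) (dg s) - K * k * exp (k * s))); [exact Ht | | |].
    - intros s Hs. unfold signed. continuity_R; first [apply Hfc | apply Hgc]; exact Hs.
    - intros s Hs. unfold signed. apply right_deriv_minus; [|apply right_deriv_exp].
      right_deriv_R; first [apply Hfd | apply Hgd]; exact Hs.
    - intros s Hs. pose proof (Hsigned_le (df s) (dg s)). pose proof (Hbound s Hs). lra. }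
  assert (Hsigned0 : signed (f 0) (g 0) = 0) by (unfold signed; rewrite !H0; ring).
  assert (Hsignedt : signed (f t) (g t) = l1dist (f t) (g t))
    by (unfold signed, l1dist; rewrite !Hsg_eq; reflexivity).
  rewrite Hsigned0, Hsignedt, Rmult_0_r, exp_0 in Hz. lra.
Qed.

Definition right_diff_path (Y DY : R -> vec3) : Prop :=
  (forall i t, 0 < t -> continuous (fun s => Y s i) t) /\
  (forall i t, 0 <= t -> right_deriv (fun s => Y s i) t (DY t i)).

Lemma right_diff_path_bounded (Y DY : R -> vec3) (T : R) : right_diff_path Y DY -> 0 <= T ->
  exists M, 0 <= M /\ forall t k, 0 <= t <= T -> Rabs (Y t k) <= M.
Proof.
  intros [Hcont Hder] HT.
  assert (Hk : forall k, exists M, forall t, 0 <= t <= T -> Rabs (Y t k) <= M).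
  { intros k. apply bounded_on_interval; [exact HT | intros t Ht; apply Hcont; lra|].
    intros t Ht. apply (right_deriv_right_cont (fun s => Y s k) t (DY t k)), Hder. lra. }
  destruct (Hk I1) as [M1 H1], (Hk I2) as [M2 H2], (Hk I3) as [M3 H3].
  exists (Rmax 0 (Rmax M1 (Rmax M2 M3))). split; [apply Rmax_l|]. intros t k Ht.
  pose proof (Rmax_r 0 (Rmax M1 (Rmax M2 M3))).
  pose proof (Rmax_l M1 (Rmax M2 M3)). pose proof (Rmax_r M1 (Rmax M2 M3)).
  pose proof (Rmax_l M2 M3). pose proof (Rmax_r M2 M3).
  destruct k; [specialize (H1 t Ht) | specialize (H2 t Ht) | specialize (H3 t Ht)]; lra.
Qed.

Lemma right_diff_paths_eq (X Y DX DY : R -> vec3) (C t : R) : 0 <= C -> 0 <= t ->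
  right_diff_path X DX -> right_diff_path Y DY -> (forall i, X 0 i = Y 0 i) ->
  (forall s i, 0 <= s < t -> Rabs (DX s i - DY s i) <= C * l1dist (X s) (Y s)) ->
  forall i, X t i = Y t i.
Proof.
  intros HC Ht [HXc HXd] [HYc HYd] H0 HD.
  set (sq := fun s k => (X s k - Y s k) * (X s k - Y s k)).
  set (dsq := fun s k =>
         (X s k - Y s k) * (DX s k - DY s k) + (DX s k - DY s k) * (X s k - Y s k)).
  (* The squared euclidean distance z satisfies z' <= 6 C z, since l1dist^2 <= 3 z. *)
  assert (Hz : sq t I1 + sq t I2 + sq t I3 <= 0).
  { apply (right_deriv_gronwall 0 t (6 * C) 1 (fun s => sq s I1 + sq s I2 + sq s I3)
             (fun s => dsq s I1 + dsq s I2 + dsq s I3)); try lra.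
    - intros s Hs. unfold sq. continuity_R; first [apply HXc | apply HYc]; lra.
    - intros s Hs.
      assert (Hk : forall k, right_deriv (fun u => sq u k) s (dsq s k)).
      { intros k. apply (right_deriv_mult (fun u => X u k - Y u k) (fun u => X u k - Y u k));
          apply right_deriv_minus; first [apply HXd | apply HYd]; lra. }
      repeat apply right_deriv_plus; apply Hk.
    - intros s Hs _.
      assert (Hk : forall k, (X s k - Y s k) * (DX s k - DY s k)
                             <= Rabs (X s k - Y s k) * (C * l1dist (X s) (Y s))).
      { intros k. apply (Rle_trans _ _ _ (Rle_abs _)). rewrite Rabs_mult.
        apply Rmult_le_compat_l; [apply Rabs_pos | apply HD, Hs]. }
      pose proof (Hk I1). pose proof (Hk I2). pose proof (Hk I3).
      assert (C * (l1dist (X s) (Y s) * l1dist (X s) (Y s))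
              <= C * (3 * (sq s I1 + sq s I2 + sq s I3)))
        by (apply Rmult_le_compat_l; [exact HC | apply l1dist_sqr_le]).
      assert (Rabs (X s I1 - Y s I1) * (C * l1dist (X s) (Y s))
              + Rabs (X s I2 - Y s I2) * (C * l1dist (X s) (Y s))
              + Rabs (X s I3 - Y s I3) * (C * l1dist (X s) (Y s))
              = C * (l1dist (X s) (Y s) * l1dist (X s) (Y s))) by (unfold l1dist; ring).
      unfold dsq. lra.
    - unfold sq. rewrite !H0. lra. }
  intros i. unfold sq in Hz.
  pose proof (Rle_0_sqr (X t I1 - Y t I1)). pose proof (Rle_0_sqr (X t I2 - Y t I2)).
  pose proof (Rle_0_sqr (X t I3 - Y t I3)). unfold Rsqr in *.
  destruct i; nra.
Qed.

(** * Picard iteration for globally Lipschitz fields *)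

Lemma eq0_of_le_geom_half (a C : R) : (forall n, Rabs a <= C * (/ 2) ^ n) -> a = 0.
Proof.
  intros H.
  assert (Hlim : is_lim_seq (fun n => C * (/ 2) ^ n) (C * 0)).
  { apply (is_lim_seq_scal_l _ C 0), is_lim_seq_geom. rewrite Rabs_pos_eq; lra. }
  pose proof (is_lim_seq_le _ _ _ _ H (is_lim_seq_const (Rabs a)) Hlim) as Hle.
  simpl in Hle. rewrite Rmult_0_r in Hle. pose proof (Rabs_pos a).
  apply Rabs_eq_0. lra.
Qed.

Lemma geom_half_small (C eps : R) : 0 < eps ->
  exists N, forall n, (N <= n)%nat -> C * (/ 2) ^ n < eps.
Proof.
  intros Heps.
  assert (Hlim : is_lim_seq (fun n => C * (/ 2) ^ n) (C * 0)).
  { apply (is_lim_seq_scal_l _ C 0), is_lim_seq_geom. rewrite Rabs_pos_eq; lra. }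
  rewrite Rmult_0_r in Hlim. apply is_lim_seq_spec in Hlim.
  destruct (Hlim (mkposreal eps Heps)) as [N HN]. exists N. intros n Hn.
  specialize (HN n Hn). simpl in HN. apply Rabs_def2 in HN. lra.
Qed.

Section Picard.

Variable G : vec3 -> vec3.
Variable Lc : R.
Hypothesis Lc_pos : 0 < Lc.
Hypothesis G_lipschitz : forall x y, l1dist (G x) (G y) <= Lc * l1dist x y.
Variable v : vec3.

Lemma continuous_lipschitz_comp (f : R -> vec3) (t : R) :
  (forall k, continuous (fun s => f s k) t) -> forall i, continuous (fun s => G (f s) i) t.
Proof.
  intros Hf i. apply continuous_eps. intros eps Heps.
  set (e := eps / (3 * Lc)). assert (He : 0 < e) by (apply Rdiv_lt_0_compat; lra).
  destruct (proj1 (continuous_eps _ t) (Hf I1) e He) as [d1 [Hd1 H1]].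
  destruct (proj1 (continuous_eps _ t) (Hf I2) e He) as [d2 [Hd2 H2]].
  destruct (proj1 (continuous_eps _ t) (Hf I3) e He) as [d3 [Hd3 H3]].
  exists (Rmin d1 (Rmin d2 d3)). split; [repeat apply Rmin_pos; assumption|]. intros s Hs.
  pose proof (Rmin_l d1 (Rmin d2 d3)). pose proof (Rmin_r d1 (Rmin d2 d3)).
  pose proof (Rmin_l d2 d3). pose proof (Rmin_r d2 d3).
  specialize (H1 s ltac:(lra)). specialize (H2 s ltac:(lra)). specialize (H3 s ltac:(lra)).
  apply (Rle_lt_trans _ _ _ (Rabs_le_l1dist _ _ i)).
  apply (Rle_lt_trans _ _ _ (G_lipschitz _ _)).
  replace eps with (Lc * (3 * e)) by (unfold e; field; lra).
  apply Rmult_lt_compat_l; [exact Lc_pos|]. unfold l1dist. lra.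
Qed.

(* Integrating up to [Rmax 0 t] makes each iterate constant on [t <= 0] and continuous. *)
Fixpoint picard (n : nat) (t : R) : vec3 :=
  match n with
  | O => v
  | S n => fun i => v i + RInt (fun s => G (picard n s) i) 0 (Rmax 0 t)
  end.

Definition picard_deriv (n : nat) (t : R) : vec3 :=
  match n with
  | O => fun _ => 0
  | S n => G (picard n t)
  end.

Lemma picard_continuous (n : nat) (i : idx) (t : R) : continuous (fun s => picard n s i) t.
Proof.
  revert i t. induction n as [|n IH]; intros i t; simpl; [apply continuous_const|].
  apply continuous_Rplus; [apply continuous_const|].
  apply (continuous_comp (fun s => Rmax 0 s) (fun b => RInt (fun s => G (picard n s) i) 0 b)).
  - apply continuous_Rmax0.
  - apply continuous_integral. intros s. apply continuous_lipschitz_comp. intros k. apply IH.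
Qed.

Lemma picard_nonpos (n : nat) (t : R) (i : idx) : t <= 0 -> picard n t i = v i.
Proof.
  intros Ht. destruct n as [|n]; simpl; [reflexivity|].
  rewrite Rmax_left, RInt_point by lra. unfold zero. simpl. ring.
Qed.

Lemma picard_right_deriv (n : nat) (t : R) (i : idx) : 0 <= t ->
  right_deriv (fun s => picard n s i) t (picard_deriv n t i).
Proof.
  intros Ht. destruct n as [|n]; simpl; [apply right_deriv_const|].
  apply (right_deriv_ext_right (fun s => v i + RInt (fun s => G (picard n s) i) 0 s) _ _ _ 1);
    [lra | intros s Hs; rewrite Rmax_right by lra; reflexivity|].
  apply right_deriv_integral. intros s. apply continuous_lipschitz_comp. intros k.
  apply picard_continuous.
Qed.

Definition picard_K : R := l1dist (G v) (fun _ => 0) / Lc.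

Definition picard_B (T : R) : R := picard_K * exp (2 * Lc * T).

Lemma picard_K_ge0 : 0 <= picard_K.
Proof.
  unfold picard_K. apply Rmult_le_pos; [apply l1dist_ge0 | left; apply Rinv_0_lt_compat, Lc_pos].
Qed.

Lemma picard_B_ge0 (T : R) : 0 <= picard_B T.
Proof. unfold picard_B. apply Rmult_le_pos; [apply picard_K_ge0 | left; apply exp_pos]. Qed.

Lemma picard_step_of_deriv (n : nat) (t : R) : 0 <= t ->
  (forall s, 0 <= s < t -> l1dist (picard_deriv (S n) s) (picard_deriv n s)
                           <= picard_K * (/ 2) ^ n * (2 * Lc) * exp (2 * Lc * s)) ->
  l1dist (picard (S n) t) (picard n t) <= picard_K * (/ 2) ^ n * exp (2 * Lc * t).
Proof.
  intros Ht Hbound. apply l1dist_le_of_right_deriv with (picard_deriv (S n)) (picard_deriv n).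
  - pose proof picard_K_ge0. pose proof (pow_lt (/ 2) n ltac:(lra)). nra.
  - exact Ht.
  - intros i. rewrite !picard_nonpos by lra. reflexivity.
  - intros i s _. apply picard_continuous.
  - intros i s _. apply picard_continuous.
  - intros i s Hs. apply picard_right_deriv. lra.
  - intros i s Hs. apply picard_right_deriv. lra.
  - exact Hbound.
Qed.

(* The weight exp (2 Lc t) turns the Lipschitz estimate into a contraction by 1/2. *)
Lemma picard_step (n : nat) (t : R) : 0 <= t ->
  l1dist (picard (S n) t) (picard n t) <= picard_K * (/ 2) ^ n * exp (2 * Lc * t).
Proof.
  revert t. induction n as [|n IH]; intros t Ht; apply picard_step_of_deriv; try exact Ht;
    intros s Hs.
  - assert (Hexp : 1 <= exp (2 * Lc * s)) by (pose proof (exp_ineq1_le (2 * Lc * s)); nra).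
    simpl. unfold picard_K.
    replace (l1dist (G v) (fun _ => 0) / Lc * 1 * (2 * Lc))
      with (2 * l1dist (G v) (fun _ => 0)) by (field; lra).
    pose proof (l1dist_ge0 (G v) (fun _ => 0)). nra.
  - change (l1dist (G (picard (S n) s)) (G (picard n s))
            <= picard_K * (/ 2) ^ S n * (2 * Lc) * exp (2 * Lc * s)).
    apply (Rle_trans _ _ _ (G_lipschitz _ _)).
    pose proof (IH s ltac:(lra)). simpl pow.
    replace (picard_K * (/ 2 * (/ 2) ^ n) * (2 * Lc) * exp (2 * Lc * s))
      with (Lc * (picard_K * (/ 2) ^ n * exp (2 * Lc * s))) by (field; lra).
    apply Rmult_le_compat_l; lra.
Qed.

Lemma picard_step_le (n : nat) (t T : R) : 0 <= T -> t <= T ->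
  l1dist (picard (S n) t) (picard n t) <= picard_B T * (/ 2) ^ n.
Proof.
  intros HT Ht. pose proof (pow_lt (/ 2) n ltac:(lra)). pose proof (picard_B_ge0 T).
  destruct (Rle_or_lt t 0) as [Hneg|Hpos].
  - unfold l1dist. rewrite !picard_nonpos, !Rminus_eq_0, Rabs_R0 by exact Hneg. nra.
  - apply (Rle_trans _ _ _ (picard_step n t ltac:(lra))). unfold picard_B.
    assert (exp (2 * Lc * t) <= exp (2 * Lc * T)).
    { destruct (Req_dec t T) as [->|]; [lra|]. left. apply exp_increasing. nra. }
    pose proof picard_K_ge0. assert (0 <= picard_K * (/ 2) ^ n) by nra. nra.
Qed.

Lemma picard_telescope (n k : nat) (t T : R) (i : idx) : 0 <= T -> t <= T ->
  Rabs (picard (n + k) t i - picard n t i)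
    <= 2 * picard_B T * (/ 2) ^ n - 2 * picard_B T * (/ 2) ^ (n + k).
Proof.
  intros HT Ht. induction k as [|k IH].
  - rewrite Nat.add_0_r, Rminus_eq_0, Rabs_R0. lra.
  - rewrite Nat.add_succ_r.
    pose proof (picard_step_le (n + k) t T HT Ht).
    pose proof (Rabs_le_l1dist (picard (S (n + k)) t) (picard (n + k) t) i).
    pose proof (Rabs_triang (picard (S (n + k)) t i - picard (n + k) t i)
                  (picard (n + k) t i - picard n t i)) as Htri.
    replace (picard (S (n + k)) t i - picard (n + k) t i + (picard (n + k) t i - picard n t i))
      with (picard (S (n + k)) t i - picard n t i) in Htri by ring.
    simpl pow. lra.
Qed.

Lemma picard_cauchy_le (n m : nat) (t T : R) (i : idx) : 0 <= T -> t <= T -> (n <= m)%nat ->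
  Rabs (picard m t i - picard n t i) <= 2 * picard_B T * (/ 2) ^ n.
Proof.
  intros HT Ht Hnm. replace m with (n + (m - n))%nat by lia.
  pose proof (picard_telescope n (m - n) t T i HT Ht).
  pose proof (pow_lt (/ 2) (n + (m - n)) ltac:(lra)). pose proof (picard_B_ge0 T). nra.
Qed.

Lemma picard_cauchy (t : R) (i : idx) : ex_finite_lim_seq (fun n => picard n t i).
Proof.
  apply ex_lim_seq_cauchy_corr. intros eps.
  set (T := Rmax 0 t). pose proof (Rmax_l 0 t). pose proof (Rmax_r 0 t).
  destruct (geom_half_small (2 * picard_B T) eps (cond_pos eps)) as [N HN].
  exists N. intros n m Hn Hm. destruct (Compare_dec.le_lt_dec n m).
  - rewrite Rabs_minus_sym. eapply Rle_lt_trans; [apply picard_cauchy_le; eauto|]. auto.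
  - eapply Rle_lt_trans; [apply picard_cauchy_le; eauto; lia|]. auto.
Qed.

Definition picard_limit (t : R) : vec3 := fun i => real (Lim_seq (fun n => picard n t i)).

Lemma picard_limit_approx (n : nat) (t T : R) (i : idx) : 0 <= T -> t <= T ->
  Rabs (picard n t i - picard_limit t i) <= 2 * picard_B T * (/ 2) ^ n.
Proof.
  intros HT Ht. rewrite Rabs_minus_sym.
  assert (Hlim : is_lim_seq (fun m => Rabs (picard m t i - picard n t i))
                   (Rabs (picard_limit t i - picard n t i))).
  { apply (is_lim_seq_abs _ (picard_limit t i - picard n t i)).
    apply is_lim_seq_minus'; [|apply is_lim_seq_const].
    apply (Lim_seq_correct' _ (picard_cauchy t i)). }
  apply (is_lim_seq_le_loc _ _ _ _
           ltac:(exists n; intros m Hm; exact (picard_cauchy_le n m t T i HT Ht Hm))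
           Hlim (is_lim_seq_const _)).
Qed.

Lemma l1dist_picard_limit_le (n : nat) (t T : R) : 0 <= T -> t <= T ->
  l1dist (picard n t) (picard_limit t) <= 3 * (2 * picard_B T * (/ 2) ^ n).
Proof.
  intros HT Ht. unfold l1dist.
  pose proof (picard_limit_approx n t T I1 HT Ht). pose proof (picard_limit_approx n t T I2 HT Ht).
  pose proof (picard_limit_approx n t T I3 HT Ht). lra.
Qed.

Lemma picard_limit_0 (i : idx) : picard_limit 0 i = v i.
Proof.
  apply Rminus_diag_uniq. apply (eq0_of_le_geom_half _ (2 * picard_B 0)). intros n.
  rewrite <- (picard_nonpos n 0 i (Rle_refl 0)), Rabs_minus_sym.
  apply picard_limit_approx; lra.
Qed.

Lemma picard_limit_continuous (i : idx) (t : R) : continuous (fun s => picard_limit s i) t.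
Proof.
  apply continuous_eps. intros eps Heps.
  set (T := Rabs t + 1). pose proof (Rabs_pos t). pose proof (Rle_abs t).
  destruct (geom_half_small (2 * picard_B T) (eps / 3) ltac:(lra)) as [N HN].
  specialize (HN N (Nat.le_refl N)).
  destruct (proj1 (continuous_eps _ t) (picard_continuous N i t) (eps / 3) ltac:(lra))
    as [del [Hdel Hclose]].
  exists (Rmin del 1). split; [apply Rmin_pos; lra|]. intros s Hs.
  pose proof (Rmin_l del 1). pose proof (Rmin_r del 1). pose proof (Rabs_def2 _ _ Hs).
  pose proof (picard_limit_approx N s T i ltac:(unfold T; lra) ltac:(unfold T; lra)) as Hs'.
  pose proof (picard_limit_approx N t T i ltac:(unfold T; lra) ltac:(unfold T; lra)) as Ht'.
  specialize (Hclose s ltac:(lra)).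
  apply Rabs_le_between in Hs', Ht'. apply Rabs_def2 in Hclose. apply Rabs_def1; lra.
Qed.

Lemma continuous_G_picard_limit (i : idx) (t : R) : continuous (fun s => G (picard_limit s) i) t.
Proof. apply continuous_lipschitz_comp. intros k. apply picard_limit_continuous. Qed.

Lemma picard_integral_error (n : nat) (t : R) (i : idx) : 0 <= t ->
  Rabs (picard (S n) t i - (v i + RInt (fun s => G (picard_limit s) i) 0 t))
    <= t * (Lc * (3 * (2 * picard_B t * (/ 2) ^ n))).
Proof.
  intros Ht.
  assert (Hex : forall f : R -> vec3, (forall k s, continuous (fun u => f u k) s) ->
                  ex_RInt (fun s => G (f s) i) 0 t).
  { intros f Hf. apply (ex_RInt_continuous (V := R_CompleteNormedModule)). intros s _.
    apply continuous_lipschitz_comp. intros k. apply Hf. }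
  assert (Hdiff : picard (S n) t i - (v i + RInt (fun s => G (picard_limit s) i) 0 t)
                  = RInt (fun s => G (picard n s) i - G (picard_limit s) i) 0 t).
  { simpl. rewrite Rmax_right by exact Ht.
    pose proof (RInt_minus (V := R_CompleteNormedModule) _ _ 0 t
                  (Hex _ (picard_continuous n)) (Hex _ picard_limit_continuous)) as Hm.
    unfold minus, plus, opp in Hm. simpl in Hm.
    change (RInt (fun s => G (picard n s) i - G (picard_limit s) i) 0 t)
      with (RInt (fun s => G (picard n s) i + - G (picard_limit s) i) 0 t).
    rewrite Hm. ring. }
  rewrite Hdiff. rewrite <- (Rminus_0_r t) at 2.
  apply abs_RInt_le_const; [exact Ht| |].
  - apply (ex_RInt_continuous (V := R_CompleteNormedModule)). intros s _.
    apply continuous_Rminus; [|apply continuous_G_picard_limit].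
    apply continuous_lipschitz_comp. intros k. apply picard_continuous.
  - intros s Hs. apply (Rle_trans _ _ _ (Rabs_le_l1dist _ _ i)).
    apply (Rle_trans _ _ _ (G_lipschitz _ _)). apply Rmult_le_compat_l; [lra|].
    apply l1dist_picard_limit_le; lra.
Qed.

Lemma picard_limit_integral (t : R) (i : idx) : 0 <= t ->
  picard_limit t i = v i + RInt (fun s => G (picard_limit s) i) 0 t.
Proof.
  intros Ht. apply Rminus_diag_uniq.
  apply (eq0_of_le_geom_half _ (2 * picard_B t + t * (Lc * (3 * (2 * picard_B t))))).
  intros n.
  pose proof (picard_integral_error n t i Ht) as Herr.
  pose proof (picard_limit_approx (S n) t t i Ht (Rle_refl t)) as Happrox.
  rewrite Rabs_minus_sym in Happrox. simpl pow in Happrox.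
  pose proof (Rabs_triang (picard_limit t i - picard (S n) t i)
                (picard (S n) t i - (v i + RInt (fun s => G (picard_limit s) i) 0 t))) as Htri.
  replace (picard_limit t i - picard (S n) t i
           + (picard (S n) t i - (v i + RInt (fun s => G (picard_limit s) i) 0 t)))
    with (picard_limit t i - (v i + RInt (fun s => G (picard_limit s) i) 0 t)) in Htri by ring.
  pose proof (pow_lt (/ 2) n ltac:(lra)). pose proof (picard_B_ge0 t).
  assert (0 <= picard_B t * (/ 2) ^ n) by nra.
  apply (Rle_trans _ _ _ Htri). nra.
Qed.

Lemma picard_limit_right_deriv (i : idx) (t : R) : 0 <= t ->
  right_deriv (fun s => picard_limit s i) t (G (picard_limit t) i).
Proof.
  intros Ht.
  apply (right_deriv_ext_right (fun s => v i + RInt (fun s => G (picard_limit s) i) 0 s) _ _ _ 1);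
    [lra | intros s Hs; symmetry; apply picard_limit_integral; lra |].
  apply right_deriv_integral, continuous_G_picard_limit.
Qed.

End Picard.

(** * The switched food chain *)

Lemma Rabs_lincomb3_le (a1 a2 a3 u1 u2 u3 A : R) :
  Rabs a1 <= A -> Rabs a2 <= A -> Rabs a3 <= A ->
  Rabs (a1 * u1 + a2 * u2 + a3 * u3) <= A * (Rabs u1 + Rabs u2 + Rabs u3).
Proof.
  intros H1 H2 H3.
  pose proof (Rabs_triang (a1 * u1 + a2 * u2) (a3 * u3)).
  pose proof (Rabs_triang (a1 * u1) (a2 * u2)). rewrite !Rabs_mult in *.
  pose proof (Rmult_le_compat_r _ _ _ (Rabs_pos u1) H1).
  pose proof (Rmult_le_compat_r _ _ _ (Rabs_pos u2) H2).
  pose proof (Rmult_le_compat_r _ _ _ (Rabs_pos u3) H3).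
  lra.
Qed.

Definition clamp (M y : R) : R := Rmax 0 (Rmin y M).

Definition clampv (M : R) (x : vec3) : vec3 := fun k => clamp M (x k).

Definition in_cube (M : R) (x : vec3) : Prop := forall k, Rabs (x k) <= M.

Lemma clamp_range (M y : R) : 0 <= M -> 0 <= clamp M y <= M.
Proof. intros HM. unfold clamp, Rmax, Rmin. destruct (Rle_dec y M), (Rle_dec 0 _); lra. Qed.

Lemma clamp_le_Rabs (M y : R) : 0 <= M -> clamp M y <= Rabs y.
Proof.
  intros HM. pose proof (Rle_abs y). pose proof (Rabs_pos y).
  unfold clamp, Rmax, Rmin. destruct (Rle_dec y M), (Rle_dec 0 _); lra.
Qed.

Lemma clamp_lipschitz (M y y' : R) : 0 <= M -> Rabs (clamp M y - clamp M y') <= Rabs (y - y').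
Proof.
  intros HM. pose proof (Rle_abs (y - y')). pose proof (Rabs_maj2 (y - y')).
  apply Rabs_le. unfold clamp, Rmax, Rmin.
  destruct (Rle_dec y M), (Rle_dec y' M); repeat destruct (Rle_dec 0 _); lra.
Qed.

Lemma clamp_id (M y : R) : 0 <= y <= M -> clamp M y = y.
Proof. intros H. unfold clamp, Rmax, Rmin. destruct (Rle_dec y M), (Rle_dec 0 _); lra. Qed.

Lemma clampv_in_cube (M : R) (x : vec3) : 0 <= M -> in_cube M (clampv M x).
Proof.
  intros HM k. unfold clampv. pose proof (clamp_range M (x k) HM).
  rewrite Rabs_pos_eq; lra.
Qed.

Lemma l1dist_clampv (M : R) (x y : vec3) : 0 <= M ->
  l1dist (clampv M x) (clampv M y) <= l1dist x y.
Proof.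
  intros HM. unfold l1dist, clampv.
  pose proof (clamp_lipschitz M (x I1) (y I1) HM). pose proof (clamp_lipschitz M (x I2) (y I2) HM).
  pose proof (clamp_lipschitz M (x I3) (y I3) HM). lra.
Qed.

Lemma l1dist_zero_cube (M : R) (x : vec3) : in_cube M x -> l1dist x (fun _ => 0) <= 3 * M.
Proof.
  intros Hx. unfold l1dist. rewrite !Rminus_0_r.
  pose proof (Hx I1). pose proof (Hx I2). pose proof (Hx I3). lra.
Qed.

Section Model.

Variables (r d b1 b2 : R) (c1 c2 e1 e2 : state -> R).
Hypotheses (hr : 0 < r) (hd : 0 < d) (hb1 : 0 < b1) (hb2 : 0 < b2)
  (hc1 : forall j, 0 < c1 j) (hc2 : forall j, 0 < c2 j)
  (he1 : forall j, 0 < e1 j) (he2 : forall j, 0 < e2 j).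

Local Notation f := (fvec r d b1 b2 c1 c2 e1 e2).

Definition field (j : state) (x : vec3) : vec3 := fun i => x i * f x j i.

Definition coef_bound : R :=
  1 + b1 + b2 + c1 s1 + c1 s2 + c2 s1 + c2 s2 + e1 s1 + e1 s2 + e2 s1 + e2 s2.

Lemma coef_bound_spec (j : state) :
  1 <= coef_bound /\ b1 <= coef_bound /\ b2 <= coef_bound /\ c1 j <= coef_bound /\
  c2 j <= coef_bound /\ e1 j <= coef_bound /\ e2 j <= coef_bound.
Proof.
  unfold coef_bound. pose proof (hc1 s1). pose proof (hc1 s2). pose proof (hc2 s1).
  pose proof (hc2 s2). pose proof (he1 s1). pose proof (he1 s2). pose proof (he2 s1).
  pose proof (he2 s2). destruct j; repeat split; lra.
Qed.

Lemma fvec_lipschitz (x y : vec3) (j : state) (i : idx) :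
  Rabs (f x j i - f y j i) <= coef_bound * l1dist x y.
Proof.
  destruct (coef_bound_spec j) as (H1 & Hb1 & Hb2 & Hc1 & Hc2 & He1 & He2).
  pose proof (hc1 j). pose proof (hc2 j). pose proof (he1 j). pose proof (he2 j).
  assert (Hpos : forall a, 0 <= a <= coef_bound -> Rabs a <= coef_bound)
    by (intros a Ha; rewrite Rabs_pos_eq; lra).
  unfold l1dist. destruct i; simpl.
  - replace (r - x I1 - b1 * x I2 - c1 j * x I3 - (r - y I1 - b1 * y I2 - c1 j * y I3))
      with (- (1 * (x I1 - y I1) + b1 * (x I2 - y I2) + c1 j * (x I3 - y I3))) by ring.
    rewrite Rabs_Ropp. apply Rabs_lincomb3_le; apply Hpos; lra.
  - replace (r - x I2 - b2 * x I1 - c2 j * x I3 - (r - y I2 - b2 * y I1 - c2 j * y I3))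
      with (- (b2 * (x I1 - y I1) + 1 * (x I2 - y I2) + c2 j * (x I3 - y I3))) by ring.
    rewrite Rabs_Ropp. apply Rabs_lincomb3_le; apply Hpos; lra.
  - replace (e1 j * x I1 + e2 j * x I2 - d - (e1 j * y I1 + e2 j * y I2 - d))
      with (e1 j * (x I1 - y I1) + e2 j * (x I2 - y I2) + 0 * (x I3 - y I3)) by ring.
    apply Rabs_lincomb3_le; apply Hpos; lra.
Qed.

Definition fbound (M : R) : R := r + d + 3 * coef_bound * M.

Lemma fbound_pos (M : R) : 0 <= M -> 0 < fbound M.
Proof. intros HM. destruct (coef_bound_spec s1) as [HA _]. unfold fbound. nra. Qed.

Lemma Rabs_fvec_cube (M : R) (x : vec3) (j : state) (i : idx) :
  in_cube M x -> Rabs (f x j i) <= fbound M.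
Proof.
  intros Hx. pose proof (fvec_lipschitz x (fun _ => 0) j i) as Hlip.
  pose proof (l1dist_zero_cube M x Hx). destruct (coef_bound_spec j) as [HA _].
  assert (Hf0 : Rabs (f (fun _ => 0) j i) <= r + d).
  { destruct i; simpl; [rewrite Rabs_pos_eq | rewrite Rabs_pos_eq | rewrite Rabs_left]; lra. }
  pose proof (Rabs_triang_inv (f x j i) (f (fun _ => 0) j i)).
  unfold fbound. nra.
Qed.

Lemma field_lipschitz_cube (M : R) (x y : vec3) (j : state) (i : idx) :
  in_cube M x -> in_cube M y ->
  Rabs (field j x i - field j y i) <= (fbound M + M * coef_bound) * l1dist x y.
Proof.
  intros Hx Hy. unfold field.
  replace (x i * f x j i - y i * f y j i)
    with ((x i - y i) * f x j i + y i * (f x j i - f y j i)) by ring.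
  apply (Rle_trans _ _ _ (Rabs_triang _ _)). rewrite !Rabs_mult.
  pose proof (Rabs_fvec_cube M x j i Hx). pose proof (fvec_lipschitz x y j i).
  pose proof (Rabs_le_l1dist x y i). pose proof (Hy i).
  pose proof (Rabs_pos (x i - y i)). pose proof (Rabs_pos (y i)). pose proof (l1dist_ge0 x y).
  pose proof (Rabs_pos (f x j i)). pose proof (Rabs_pos (f x j i - f y j i)).
  assert (Rabs (x i - y i) * Rabs (f x j i) <= l1dist x y * fbound M)
    by (apply Rmult_le_compat; lra).
  assert (Rabs (y i) * Rabs (f x j i - f y j i) <= M * (coef_bound * l1dist x y))
    by (apply Rmult_le_compat; lra).
  lra.
Qed.

Definition clamped_field (j : state) (M : R) (x : vec3) : vec3 := field j (clampv M x).

Lemma clamped_field_lipschitz (j : state) (M : R) (x y : vec3) : 0 <= M ->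
  l1dist (clamped_field j M x) (clamped_field j M y)
    <= 3 * (fbound M + M * coef_bound) * l1dist x y.
Proof.
  intros HM. unfold clamped_field.
  pose proof (l1dist_clampv M x y HM) as Hcl.
  assert (Hi : forall i, Rabs (field j (clampv M x) i - field j (clampv M y) i)
                         <= (fbound M + M * coef_bound) * l1dist x y).
  { intros i. apply (Rle_trans _ _ _ (field_lipschitz_cube M _ _ j i
                                         (clampv_in_cube M x HM) (clampv_in_cube M y HM))).
    apply Rmult_le_compat_l; [|exact Hcl].
    pose proof (Rabs_fvec_cube M (clampv M x) j I1 (clampv_in_cube M x HM)).
    pose proof (Rabs_pos (f (clampv M x) j I1)). destruct (coef_bound_spec j) as [HA _].
    assert (0 <= M * coef_bound) by nra. lra. }
  unfold l1dist at 1. pose proof (Hi I1). pose proof (Hi I2). pose proof (Hi I3). lra.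
Qed.

Lemma clamped_field_lower (j : state) (M : R) (x : vec3) (i : idx) : 0 <= M ->
  - fbound M * Rabs (x i) <= clamped_field j M x i.
Proof.
  intros HM. unfold clamped_field, field, clampv.
  pose proof (clamp_range M (x i) HM). pose proof (clamp_le_Rabs M (x i) HM).
  pose proof (Rabs_fvec_cube M (clampv M x) j i (clampv_in_cube M x HM)) as Hf.
  apply Rabs_le_between in Hf. unfold clampv in Hf. nra.
Qed.

Definition kap : R :=
  Rmin (Rmin (c1 s1 / e1 s1) (c1 s2 / e1 s2)) (Rmin (c2 s1 / e2 s1) (c2 s2 / e2 s2)).

Lemma kap_pos : 0 < kap.
Proof.
  unfold kap. repeat apply Rmin_pos; apply Rdiv_lt_0_compat; auto.
Qed.

Lemma kap_le (j : state) : kap * e1 j <= c1 j /\ kap * e2 j <= c2 j.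
Proof.
  assert (Hdiv : forall a b, 0 < b -> kap <= a / b -> kap * b <= a).
  { intros a b Hb Hk. apply (Rmult_le_compat_r b) in Hk; [|lra].
    replace (a / b * b) with a in Hk by (field; lra). exact Hk. }
  assert (Hkap : kap <= c1 j / e1 j /\ kap <= c2 j / e2 j).
  { unfold kap. destruct j; split.
    - exact (Rle_trans _ _ _ (Rmin_l _ _) (Rmin_l _ _)).
    - exact (Rle_trans _ _ _ (Rmin_r _ _) (Rmin_l _ _)).
    - exact (Rle_trans _ _ _ (Rmin_l _ _) (Rmin_r _ _)).
    - exact (Rle_trans _ _ _ (Rmin_r _ _) (Rmin_r _ _)). }
  split; apply Hdiv; [apply he1 | apply Hkap | apply he2 | apply Hkap].
Qed.

Definition lyap (x : vec3) : R := x I1 + x I2 + kap * x I3.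

Definition decay_rate : R := Rmin 1 d.

Definition drift : R := (r + 1) ^ 2 / 2.

Definition lyap_level : R := drift / decay_rate + 1.

Definition lyap_coef : R := Rmin 1 kap.

Lemma decay_rate_pos : 0 < decay_rate.
Proof. apply Rmin_pos; lra. Qed.

Lemma lyap_coef_pos : 0 < lyap_coef.
Proof. apply Rmin_pos; [lra | apply kap_pos]. Qed.

Lemma lyap_level_pos : 0 < lyap_level.
Proof.
  unfold lyap_level, drift. pose proof decay_rate_pos. pose proof (pow2_ge_0 (r + 1)).
  assert (0 <= (r + 1) ^ 2 / 2 / decay_rate) by (apply Rdiv_le_0_compat; lra). lra.
Qed.

(* Since kap <= c_i(j) / e_i(j), the predation cross terms of dV/dt are nonpositive. *)
Lemma lyap_decay (j : state) (x : vec3) : nonneg3 x ->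
  field j x I1 + field j x I2 + kap * field j x I3 <= drift - decay_rate * lyap x.
Proof.
  intros Hx. pose proof (Hx I1). pose proof (Hx I2). pose proof (Hx I3).
  destruct (kap_le j) as [K1 K2]. pose proof kap_pos. pose proof decay_rate_pos.
  assert (Hm1 : decay_rate <= 1) by apply Rmin_l. assert (Hm2 : decay_rate <= d) by apply Rmin_r.
  unfold field, lyap, drift. simpl.
  assert (0 <= (c1 j - kap * e1 j) * (x I1 * x I3)) by (apply Rmult_le_pos; nra).
  assert (0 <= (c2 j - kap * e2 j) * (x I2 * x I3)) by (apply Rmult_le_pos; nra).
  assert (0 <= (b1 + b2) * (x I1 * x I2)) by (apply Rmult_le_pos; nra).
  assert (0 <= (d - decay_rate) * (kap * x I3)) by (apply Rmult_le_pos; nra).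
  assert (0 <= (1 - decay_rate) * (2 * r + 1 + decay_rate)) by (apply Rmult_le_pos; nra).
  pose proof (pow2_ge_0 (x I1 - (r + decay_rate) / 2)).
  pose proof (pow2_ge_0 (x I2 - (r + decay_rate) / 2)).
  nra.
Qed.

Lemma coord_le_lyap (x : vec3) (i : idx) : nonneg3 x -> x i <= lyap x / lyap_coef.
Proof.
  intros Hx. pose proof (Hx I1). pose proof (Hx I2). pose proof (Hx I3). pose proof kap_pos.
  pose proof lyap_coef_pos as Hc.
  assert (lyap_coef <= 1) by apply Rmin_l. assert (lyap_coef <= kap) by apply Rmin_r.
  apply (Rmult_le_reg_r lyap_coef); [exact Hc|]. unfold Rdiv.
  rewrite Rmult_assoc, Rinv_l, Rmult_1_r by lra. unfold lyap. destruct i; nra.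
Qed.

Definition flow_level (v : vec3) : R := Rmax (lyap v) lyap_level.

Definition flow_radius (v : vec3) : R := (flow_level v + 1) / lyap_coef.

(* The clamp makes the field globally Lipschitz; it is inactive along the flow, which
   stays in the region {x >= 0, V x <= flow_level v} inside the cube of radius
   flow_radius v. *)
Definition flow (j : state) (v : vec3) : R -> vec3 :=
  picard_limit (clamped_field j (flow_radius v)) v.

Lemma flow_radius_pos (v : vec3) : 0 < flow_radius v.
Proof.
  unfold flow_radius, flow_level. pose proof (Rmax_r (lyap v) lyap_level).
  pose proof lyap_level_pos. apply Rdiv_lt_0_compat; [lra | apply lyap_coef_pos].
Qed.

Lemma flow_lipschitz_pos (v : vec3) :
  0 < 3 * (fbound (flow_radius v) + flow_radius v * coef_bound).
Proof.
  pose proof (flow_radius_pos v). pose proof (fbound_pos (flow_radius v) ltac:(lra)).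
  destruct (coef_bound_spec s1) as [HA _]. nra.
Qed.

Lemma flow_lipschitz (j : state) (v x y : vec3) :
  l1dist (clamped_field j (flow_radius v) x) (clamped_field j (flow_radius v) y)
    <= 3 * (fbound (flow_radius v) + flow_radius v * coef_bound) * l1dist x y.
Proof. apply clamped_field_lipschitz. left. apply flow_radius_pos. Qed.

Lemma flow_0 (j : state) (v : vec3) (i : idx) : flow j v 0 i = v i.
Proof. exact (picard_limit_0 _ _ (flow_lipschitz_pos v) (flow_lipschitz j v) v i). Qed.

Lemma flow_continuous (j : state) (v : vec3) (i : idx) (t : R) :
  continuous (fun s => flow j v s i) t.
Proof. exact (picard_limit_continuous _ _ (flow_lipschitz_pos v) (flow_lipschitz j v) v i t). Qed.

Lemma flow_path (j : state) (v : vec3) :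
  right_diff_path (flow j v) (fun t => clamped_field j (flow_radius v) (flow j v t)).
Proof.
  split; intros i t Ht; [apply flow_continuous|].
  exact (picard_limit_right_deriv _ _ (flow_lipschitz_pos v) (flow_lipschitz j v) v i t Ht).
Qed.

Lemma flow_nonneg (j : state) (v : vec3) : nonneg3 v -> forall t, 0 <= t -> nonneg3 (flow j v t).
Proof.
  intros Hv t Ht i. destruct (flow_path j v) as [Hcont Hder].
  pose proof (flow_radius_pos v). set (M := flow_radius v) in *.
  assert (HL : 0 <= fbound M) by (left; apply fbound_pos; lra).
  pose proof (right_deriv_exp_lower_bound (fun s => flow j v s i)
                (fun s => clamped_field j M (flow j v s) i) (fbound M) t HL Ht) as Hlow.
  simpl in Hlow. rewrite flow_0 in Hlow.
  pose proof (exp_pos (- fbound M * t)). pose proof (Hv i).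
  enough (v i * exp (- fbound M * t) <= flow j v t i) by nra.
  apply Hlow; [exact (Hv i) | intros s Hs; apply Hcont; lra | intros s Hs; apply Hder; lra |].
  intros s Hs. apply clamped_field_lower. lra.
Qed.

Lemma clamped_field_inactive (j : state) (v x : vec3) : nonneg3 x ->
  lyap x <= flow_level v + 1 -> clamped_field j (flow_radius v) x = field j x.
Proof.
  intros Hx HV. unfold clamped_field. f_equal. apply functional_extensionality. intros k.
  unfold clampv. apply clamp_id. split; [apply Hx|].
  apply (Rle_trans _ _ _ (coord_le_lyap x k Hx)). unfold flow_radius, Rdiv.
  apply Rmult_le_compat_r; [|exact HV]. left. apply Rinv_0_lt_compat, lyap_coef_pos.
Qed.

Lemma flow_lyap_le (j : state) (v : vec3) : nonneg3 v ->
  forall t, 0 <= t -> lyap (flow j v t) <= flow_level v.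
Proof.
  intros Hv. destruct (flow_path j v) as [Hcont Hder].
  set (cf := clamped_field j (flow_radius v)).
  apply (right_deriv_stays_below (fun t => lyap (flow j v t))
           (fun t => cf (flow j v t) I1 + cf (flow j v t) I2 + kap * cf (flow j v t) I3)).
  - intros t Ht. unfold lyap. continuity_R; apply Hcont, Ht.
  - intros t Ht. unfold lyap. right_deriv_R; apply Hder, Ht.
  - intros t Ht [Habove Hbelow]. unfold cf.
    rewrite clamped_field_inactive by (first [apply flow_nonneg; assumption | lra]).
    pose proof (lyap_decay j (flow j v t) (flow_nonneg j v Hv t Ht)).
    pose proof (Rmax_r (lyap v) lyap_level). fold (flow_level v) in *.
    pose proof decay_rate_pos.
    assert (decay_rate * lyap_level = drift + decay_rate) by (unfold lyap_level; field; lra).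
    assert (decay_rate * flow_level v < decay_rate * lyap (flow j v t))
      by (apply Rmult_lt_compat_l; lra).
    assert (decay_rate * lyap_level <= decay_rate * flow_level v)
      by (apply Rmult_le_compat_l; lra).
    lra.
  - unfold lyap. rewrite !flow_0. apply Rmax_l.
Qed.

Lemma flow_right_deriv (j : state) (v : vec3) (i : idx) (t : R) : nonneg3 v -> 0 <= t ->
  right_deriv (fun s => flow j v s i) t (field j (flow j v t) i).
Proof.
  intros Hv Ht. rewrite <- (clamped_field_inactive j v).
  - apply (proj2 (flow_path j v)), Ht.
  - apply flow_nonneg; assumption.
  - pose proof (flow_lyap_le j v Hv t Ht). lra.
Qed.

Local Notation sol := (solution r d b1 b2 c1 c2 e1 e2).

Lemma solution_path (xi : R -> state) (x0 : vec3) (X : R -> vec3) :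
  sol xi x0 X -> right_diff_path X (fun t => field (xi t) (X t)).
Proof. intros [_ H]. exact H. Qed.

Lemma solution_lower_bound (xi : R -> state) (x0 : vec3) (X : R -> vec3) (t : R) (i : idx) :
  sol xi x0 X -> 0 <= x0 i -> 0 <= t -> exists L, x0 i * exp (- L * t) <= X t i.
Proof.
  intros HX Hx0 Ht. destruct (solution_path _ _ _ HX) as [Hcont Hder].
  destruct (right_diff_path_bounded _ _ t (solution_path _ _ _ HX) Ht) as [M [HM Hbd]].
  exists (fbound M). rewrite <- (proj1 HX i).
  apply (right_deriv_exp_lower_bound (fun s => X s i) (fun s => field (xi s) (X s) i));
    [left; apply fbound_pos, HM | exact Ht | rewrite (proj1 HX i); exact Hx0
    | intros s Hs; apply Hcont; lra | intros s Hs; apply Hder; lra |].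
  intros s Hs. unfold field.
  pose proof (Rabs_fvec_cube M (X s) (xi s) i (fun k => Hbd s k ltac:(lra))) as Hf.
  apply Rabs_le_between in Hf. destruct (Rle_or_lt 0 (X s i)).
  - rewrite Rabs_pos_eq by lra. nra.
  - rewrite Rabs_left by lra. nra.
Qed.

Lemma solution_nonneg (xi : R -> state) (x0 : vec3) (X : R -> vec3) :
  sol xi x0 X -> nonneg3 x0 -> forall t, 0 <= t -> nonneg3 (X t).
Proof.
  intros HX Hx0 t Ht i. destruct (solution_lower_bound xi x0 X t i HX (Hx0 i) Ht) as [L HL].
  pose proof (exp_pos (- L * t)). pose proof (Hx0 i). nra.
Qed.

Lemma solution_pos (xi : R -> state) (x0 : vec3) (X : R -> vec3) :
  sol xi x0 X -> pos3 x0 -> forall t, 0 <= t -> pos3 (X t).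
Proof.
  intros HX Hx0 t Ht i. pose proof (Hx0 i).
  destruct (solution_lower_bound xi x0 X t i HX ltac:(lra) Ht) as [L HL].
  pose proof (exp_pos (- L * t)). nra.
Qed.

Lemma solution_unique (xi : R -> state) (x0 : vec3) (X Y : R -> vec3) :
  sol xi x0 X -> sol xi x0 Y -> forall t i, 0 <= t -> Y t i = X t i.
Proof.
  intros HX HY t i Ht.
  destruct (right_diff_path_bounded _ _ t (solution_path _ _ _ HX) Ht) as [MX [HMX BX]].
  destruct (right_diff_path_bounded _ _ t (solution_path _ _ _ HY) Ht) as [MY [HMY BY]].
  pose proof (Rmax_l MX MY). pose proof (Rmax_r MX MY). set (M := Rmax MX MY) in *.
  pose proof (fbound_pos M ltac:(lra)). destruct (coef_bound_spec s1) as [HA _].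
  apply (right_diff_paths_eq Y X (fun s => field (xi s) (Y s)) (fun s => field (xi s) (X s))
           (fbound M + M * coef_bound) t);
    [nra | exact Ht | apply (solution_path _ _ _ HY) | apply (solution_path _ _ _ HX)
    | intros k; rewrite (proj1 HX k), (proj1 HY k); reflexivity |].
  intros s k Hs. apply field_lipschitz_cube; intros m.
  - pose proof (BY s m ltac:(lra)). lra.
  - pose proof (BX s m ltac:(lra)). lra.
Qed.

Definition absorbing_set (x : vec3) : Prop := nonneg3 x /\ lyap x <= lyap_level.

Lemma absorbing_set_compact : compact3 absorbing_set.
Proof.
  pose proof kap_pos. pose proof lyap_coef_pos as Hc. split.
  - exists (lyap_level / lyap_coef). intros x [Hx HV] i. rewrite Rabs_pos_eq by apply Hx.
    apply (Rle_trans _ _ _ (coord_le_lyap x i Hx)). unfold Rdiv.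
    apply Rmult_le_compat_r; [left; apply Rinv_0_lt_compat, Hc | exact HV].
  - intros x Hout. destruct (classic (nonneg3 x)) as [Hx|Hx].
    + assert (HV : lyap_level < lyap x)
        by (destruct (Rle_or_lt (lyap x) lyap_level); [exfalso; apply Hout; split|]; assumption).
      exists ((lyap x - lyap_level) / (3 + kap)). split; [apply Rdiv_lt_0_compat; lra|].
      intros y Hy [_ HVy].
      assert (He : (lyap x - lyap_level) / (3 + kap) * (3 + kap) = lyap x - lyap_level)
        by (field; lra).
      pose proof (Rabs_def2 _ _ (Hy I1)). pose proof (Rabs_def2 _ _ (Hy I2)).
      pose proof (Rabs_def2 _ _ (Hy I3)). unfold lyap in *. nra.
    + apply not_all_ex_not in Hx. destruct Hx as [i Hi]. apply Rnot_le_lt in Hi.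
      exists (- x i). split; [lra|]. intros y Hy [Hny _].
      pose proof (Rabs_def2 _ _ (Hy i)). pose proof (Hny i). lra.
Qed.

Lemma solution_absorbed (xi : R -> state) (x0 : vec3) (X : R -> vec3) :
  sol xi x0 X -> nonneg3 x0 -> exists T, 0 <= T /\ forall t, T <= t -> absorbing_set (X t).
Proof.
  intros HX Hx0. destruct (solution_path _ _ _ HX) as [Hcont Hder].
  destruct (right_deriv_eventually_below (fun t => lyap (X t))
              (fun t => field (xi t) (X t) I1 + field (xi t) (X t) I2
                        + kap * field (xi t) (X t) I3) drift decay_rate decay_rate_pos)
    as [T [HT Hbelow]].
  - intros t Ht. unfold lyap. continuity_R; apply Hcont, Ht.
  - intros t Ht. unfold lyap. right_deriv_R; apply Hder, Ht.
  - intros t Ht. apply lyap_decay, (solution_nonneg xi x0 X HX Hx0 t Ht).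
  - exists T. split; [exact HT|]. intros t Ht. split.
    + apply (solution_nonneg xi x0 X HX Hx0). lra.
    + apply Hbelow, Ht.
Qed.

Section Switching.

Variables (xi : R -> state) (tau : nat -> R).
Hypotheses (tau_0 : tau O = 0) (tau_incr : forall n, tau n < tau (S n))
  (tau_unbounded : forall M, exists n, M < tau n)
  (xi_const : forall n t, tau n <= t < tau (S n) -> xi t = xi (tau n)).

Variable x0 : vec3.
Hypothesis x0_nonneg : nonneg3 x0.

Lemma tau_le (n m : nat) : (n <= m)%nat -> tau n <= tau m.
Proof. induction 1 as [|m _ IH]; [lra|]. pose proof (tau_incr m). lra. Qed.

Lemma tau_interval_exists (t : R) : 0 <= t -> exists n, tau n <= t < tau (S n).
Proof.
  intros Ht. destruct (tau_unbounded t) as [k Hk]. induction k as [|k IH].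
  - rewrite tau_0 in Hk. lra.
  - destruct (Rle_or_lt (tau k) t); [exists k; lra | apply IH; assumption].
Qed.

Lemma tau_interval_unique (n m : nat) (t : R) :
  tau n <= t < tau (S n) -> tau m <= t < tau (S m) -> n = m.
Proof.
  intros Hn Hm. destruct (Nat.lt_trichotomy n m) as [H|[H|H]]; [|exact H|].
  - pose proof (tau_le (S n) m H). lra.
  - pose proof (tau_le (S m) n H). lra.
Qed.

Definition switch_index (t : R) : nat :=
  epsilon (inhabits O) (fun n => tau n <= t < tau (S n)).

Lemma switch_index_spec (t : R) : 0 <= t ->
  tau (switch_index t) <= t < tau (S (switch_index t)).
Proof. intros Ht. unfold switch_index. apply epsilon_spec, tau_interval_exists, Ht. Qed.

Lemma switch_index_eq (n : nat) (t : R) : tau n <= t < tau (S n) -> switch_index t = n.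
Proof.
  intros H. pose proof (tau_le 0 n (Nat.le_0_l n)).
  apply (tau_interval_unique _ _ t); [apply switch_index_spec; lra | exact H].
Qed.

Fixpoint switch_state (n : nat) : vec3 :=
  match n with
  | O => x0
  | S n => flow (xi (tau n)) (switch_state n) (tau (S n) - tau n)
  end.

Lemma switch_state_nonneg (n : nat) : nonneg3 (switch_state n).
Proof.
  induction n as [|n IH]; simpl; [exact x0_nonneg|].
  apply flow_nonneg; [exact IH|]. pose proof (tau_incr n). lra.
Qed.

Definition piece (n : nat) (t : R) : vec3 := flow (xi (tau n)) (switch_state n) (t - tau n).

Definition glued (t : R) : vec3 := piece (switch_index t) t.

Lemma glued_on (n : nat) (t : R) : tau n <= t < tau (S n) -> glued t = piece n t.
Proof. intros H. unfold glued. rewrite (switch_index_eq n t H). reflexivity. Qed.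

Lemma piece_continuous (n : nat) (i : idx) (t : R) : continuous (fun s => piece n s i) t.
Proof. apply (continuous_shift (fun u => flow _ _ u i)), flow_continuous. Qed.

Lemma piece_at_switch (m : nat) (i : idx) : piece m (tau (S m)) i = piece (S m) (tau (S m)) i.
Proof. unfold piece. rewrite Rminus_eq_0, flow_0. reflexivity. Qed.

Lemma glued_continuous (i : idx) (t : R) : 0 < t -> continuous (fun s => glued s i) t.
Proof.
  intros Ht. pose proof (switch_index_spec t ltac:(lra)) as Hn.
  set (n := switch_index t) in *.
  destruct (Rlt_or_le (tau n) t) as [Hlt|Hle].
  - set (del := Rmin (t - tau n) (tau (S n) - t)).
    pose proof (Rmin_l (t - tau n) (tau (S n) - t)).
    pose proof (Rmin_r (t - tau n) (tau (S n) - t)).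
    apply (continuous_glue _ (fun s => piece n s i) (fun s => piece n s i) t del);
      [apply Rmin_pos; lra
      | rewrite (glued_on n t Hn); reflexivity | rewrite (glued_on n t Hn); reflexivity
      | intros s Hs; rewrite (glued_on n s); [reflexivity | unfold del in *; lra]
      | intros s Hs; rewrite (glued_on n s); [reflexivity | unfold del in *; lra]
      | apply piece_continuous | apply piece_continuous].
  - destruct n as [|m]; [rewrite tau_0 in Hle; lra|].
    assert (Htm : t = tau (S m)) by lra.
    pose proof (tau_incr m). pose proof (tau_incr (S m)).
    set (del := Rmin (tau (S m) - tau m) (tau (S (S m)) - tau (S m))).
    pose proof (Rmin_l (tau (S m) - tau m) (tau (S (S m)) - tau (S m))).
    pose proof (Rmin_r (tau (S m) - tau m) (tau (S (S m)) - tau (S m))).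
    apply (continuous_glue _ (fun s => piece m s i) (fun s => piece (S m) s i) t del);
      [apply Rmin_pos; lra | rewrite (glued_on (S m) t Hn), Htm; apply piece_at_switch
      | rewrite (glued_on (S m) t Hn); reflexivity
      | intros s Hs; rewrite (glued_on m s); [reflexivity | unfold del in *; lra]
      | intros s Hs; rewrite (glued_on (S m) s); [reflexivity | unfold del in *; lra]
      | apply piece_continuous | apply piece_continuous].
Qed.

Lemma glued_right_deriv (i : idx) (t : R) : 0 <= t ->
  right_deriv (fun s => glued s i) t (field (xi t) (glued t) i).
Proof.
  intros Ht. pose proof (switch_index_spec t Ht) as Hn. set (n := switch_index t) in *.
  rewrite (xi_const n t Hn), (glued_on n t Hn).
  apply (right_deriv_ext_right (fun s => piece n s i) _ _ _ (tau (S n) - t)); [lra| |].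
  - intros s Hs. rewrite (glued_on n s); [reflexivity | lra].
  - apply (right_deriv_shift (fun u => flow _ _ u i)), flow_right_deriv;
      [apply switch_state_nonneg | lra].
Qed.

Lemma glued_solution : sol xi x0 glued.
Proof.
  split; [|split].
  - intros i. pose proof (tau_incr 0).
    rewrite (glued_on 0 0) by lra. unfold piece. simpl. rewrite tau_0, Rminus_0_r. apply flow_0.
  - intros i t Ht. apply glued_continuous, Ht.
  - intros i t Ht. apply glued_right_deriv, Ht.
Qed.

End Switching.

Lemma solution_exists (xi : R -> state) (x0 : vec3) : nonneg3 x0 -> switching_path xi ->
  exists X, sol xi x0 X.
Proof.
  intros Hx0 [tau [H0 [Hincr [Hunb Hconst]]]].
  exists (glued xi tau x0). apply glued_solution; assumption.
Qed.

End Model.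

Theorem theorem2p1 (r d b1 b2 : R) (c1 c2 e1 e2 : state -> R)
  (hr : 0 < r) (hd : 0 < d) (hb1 : 0 < b1) (hb2 : 0 < b2)
  (hc1 : forall j, 0 < c1 j) (hc2 : forall j, 0 < c2 j)
  (he1 : forall j, 0 < e1 j) (he2 : forall j, 0 < e2 j) :
  (forall (x0 : vec3) (xi : R -> state), nonneg3 x0 -> switching_path xi ->
     exists X : R -> vec3, solution r d b1 b2 c1 c2 e1 e2 xi x0 X /\
       forall Y : R -> vec3, solution r d b1 b2 c1 c2 e1 e2 xi x0 Y ->
         forall t i, 0 <= t -> Y t i = X t i) /\
  (exists K : vec3 -> Prop,
     (forall x, K x -> nonneg3 x) /\ compact3 K /\
     forall (x0 : vec3) (xi : R -> state) (X : R -> vec3),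
       nonneg3 x0 -> switching_path xi ->
       solution r d b1 b2 c1 c2 e1 e2 xi x0 X ->
       exists T, 0 <= T /\ forall t, T <= t -> K (X t)) /\
  (forall (x0 : vec3) (xi : R -> state) (X : R -> vec3),
     pos3 x0 -> switching_path xi ->
     solution r d b1 b2 c1 c2 e1 e2 xi x0 X ->
     forall t, 0 <= t -> pos3 (X t)).
Proof.
  split; [|split].
  - intros x0 xi Hx0 Hxi.
    destruct (solution_exists r d b1 b2 c1 c2 e1 e2 hr hd hb1 hb2 hc1 hc2 he1 he2 xi x0 Hx0 Hxi)
      as [X HX].
    exists X. split; [exact HX|]. intros Y HY.
    exact (solution_unique r d b1 b2 c1 c2 e1 e2 hr hd hb1 hb2 hc1 hc2 he1 he2 xi x0 X Y HX HY).
  - exists (absorbing_set r d c1 c2 e1 e2). split; [|split].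
    + intros x [Hx _]. exact Hx.
    + exact (absorbing_set_compact r d c1 c2 e1 e2 hc1 hc2 he1 he2).
    + intros x0 xi X Hx0 _ HX.
      exact (solution_absorbed r d b1 b2 c1 c2 e1 e2 hr hd hb1 hb2 hc1 hc2 he1 he2
               xi x0 X HX Hx0).
  - intros x0 xi X Hx0 _ HX.
    exact (solution_pos r d b1 b2 c1 c2 e1 e2 hr hd hb1 hb2 hc1 hc2 he1 he2 xi x0 X HX Hx0).
Qed.
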